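(* Let $\mathbf v\in\mathbb N_0^d$ and let $P(\mathbf x,t)=\sum_{\mathbf k\le\mathbf v}p_{\mathbf k}(t)\mathbf x^{\mathbf k}$, where $p_{\mathbf k}:[0,\infty)\to\mathbb R$. Then $P$ is time-space harmonic with respect to $\{t\cdot\boldsymbol\mu\}_{t\ge0}$ if and only if, for all $t\ge0$ and all $\mathbf k\le\mathbf v$, $$p_{\mathbf k}(t)=\sum_{\mathbf k\le\mathbf i\le\mathbf v}\binom{\mathbf i}{\mathbf k}\,p_{\mathbf i}(0)\,m_{\mathbf i-\mathbf k}(-t).$$ Equivalently, $P$ is time-space harmonic if and only if $P(\mathbf x,t)=\sum_{\mathbf k\le\mathbf v}p_{\mathbf k}(0)\,Q_{\mathbf k}(\mathbf x,t)$ for all $t\ge0$; in particular every time-space harmonic polynomial is a linear combination of the $Q_{\mathbf k}$.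
   Context: Fix $d\ge1$. Multi-index notation: for $\mathbf v\in\mathbb N_0^d$, $\mathbf v!=\prod_i v_i!$, $\mathbf x^{\mathbf v}=\prod_i x_i^{v_i}$; $\mathbf k\le\mathbf v$ means $k_i\le v_i$ for all $i$; $\binom{\mathbf v}{\mathbf k}=\prod_i\binom{v_i}{k_i}$. Let $\boldsymbol\mu$ be a $d$-tuple of umbral monomials with multivariate moments $g_{\mathbf v}=E[\boldsymbol\mu^{\mathbf v}]$, $g_{\mathbf 0}=1$, and generating function $f(\boldsymbol\mu,\mathbf z)=\sum_{\mathbf v}g_{\mathbf v}\mathbf z^{\mathbf v}/\mathbf v!$ (formal power series). For $t\in\mathbb R$, $t\cdot\boldsymbol\mu$ is the auxiliary umbral $d$-tuple with moments $m_{\mathbf v}(t)=E[(t\cdot\boldsymbol\mu)^{\mathbf v}]$ defined by $\sum_{\mathbf v}m_{\mathbf v}(t)\mathbf z^{\mathbf v}/\mathbf v!=f(\boldsymbol\mu,\mathbf z)^t=\exp(t\log f(\boldsymbol\mu,\mathbf z))$. $Q_{\mathbf k}(\mathbf x,t)=E[(\mathbf x-t\cdot\boldsymbol\mu)^{\mathbf k}]=\sum_{\mathbf i\le\mathbf k}\binom{\mathbf k}{\mathbf i}\mathbf x^{\mathbf k-\mathbf i}m_{\mathbf i}(-t)$. Time-space harmonicity: the conditional evaluation given $s\cdot\boldsymbol\mu$ is defined by linearity from $E[(t\cdot\boldsymbol\mu)^{\mathbf k}\mid s\cdot\boldsymbol\mu]=\sum_{\mathbf j\le\mathbf k}\binom{\mathbf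 k}{\mathbf j}(s\cdot\boldsymbol\mu)^{\mathbf j}m_{\mathbf k-\mathbf j}(t-s)$. $P(\mathbf x,t)=\sum_{\mathbf k\le\mathbf v}p_{\mathbf k}(t)\mathbf x^{\mathbf k}$ is time-space harmonic with respect to $\{t\cdot\boldsymbol\mu\}_{t\ge0}$ if $E[P(t\cdot\boldsymbol\mu,t)\mid s\cdot\boldsymbol\mu]=P(s\cdot\boldsymbol\mu,s)$ for all $0\le s\le t$, equality meaning equality of coefficients of each $(s\cdot\boldsymbol\mu)^{\mathbf j}$; explicitly: for all $0\le s\le t$ and all $\mathbf j\le\mathbf v$, $\sum_{\mathbf j\le\mathbf k\le\mathbf v}p_{\mathbf k}(t)\binom{\mathbf k}{\mathbf j}m_{\mathbf k-\mathbf j}(t-s)=p_{\mathbf j}(s)$. *)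

From HB Require Import structures.
From mathcomp Require Import all_boot all_order all_algebra.
Set Implicit Arguments. Unset Strict Implicit. Unset Printing Implicit Defensive.
Import Order.TTheory GRing.Theory Num.Theory.
Local Open Scope ring_scope.

Definition mi (d : nat) := {ffun 'I_d -> nat}.

Definition mle d (k v : mi d) : bool := [forall i, (k i <= v i)%N].
Definition msub d (v k : mi d) : mi d := [ffun i => (v i - k i)%N].
Definition mbin d (v k : mi d) : nat := (\prod_(i < d) 'C(v i, k i))%N.
Definition mdeg d (v : mi d) : nat := (\sum_(i < d) v i)%N.
Definition m0 d : mi d := [ffun _ => 0%N].
Definition mbnd d (v : mi d) : nat := (\max_(i < d) v i)%N.

(* The list of all multi-indices k with k <= v (without repetition). *)
Definition box d (v : mi d) : seq (mi d) :=
  map (fun k : {ffun 'I_d -> 'I_(mbnd v).+1} => [ffun i => nat_of_ord (k i)] : mi d)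
      (enum [pred k : {ffun 'I_d -> 'I_(mbnd v).+1} | [forall i, (k i <= v i)%N]]).

Definition mono (R : nzRingType) d (x : 'I_d -> R) (k : mi d) : R :=
  \prod_(i < d) x i ^+ k i.

(* Formal power series in d variables, stored by their exponential
   coefficients: a represents sum_v a v z^v / v!. *)
Definition series (R : Type) d := mi d -> R.

Definition sone (R : nzRingType) d : series R d := fun v => (v == m0 d)%:R.
(* product of exponential generating functions *)
Definition smul (R : nzRingType) d (a b : series R d) : series R d :=
  fun v => \sum_(k <- box v) (mbin v k)%:R * a k * b (msub v k).
Definition spow (R : nzRingType) d (a : series R d) (n : nat) : series R d :=
  iter n (smul a) (@sone R d).
(* log f = sum_{n>=1} (-1)^(n+1) (f-1)^n / n ; for f with constant term 1
   the coefficient at v only involves n <= |v|. *)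
Definition slog (R : fieldType) d (a : series R d) : series R d :=
  fun v => \sum_(1 <= n < (mdeg v).+1)
             ((-1) ^+ n.+1 / n%:R) * spow (fun w => a w - @sone R d w) n v.
(* exp u = sum_{n>=0} u^n / n! ; for u with zero constant term
   the coefficient at v only involves n <= |v|. *)
Definition sexp (R : fieldType) d (a : series R d) : series R d :=
  fun v => \sum_(0 <= n < (mdeg v).+1) (n`!%:R)^-1 * spow a n v.

(* m_v(t) = coefficient of z^v/v! in f(mu,z)^t = exp(t log f(mu,z)),
   where g v = E[mu^v] are the moments of mu. *)
Definition moment (R : fieldType) d (g : series R d) (t : R) : series R d :=
  sexp (fun w => t * slog g w).

(* Time-space harmonicity of P(x,t) = sum_{k<=v} p k t x^k, in the explicit
   coefficient form given in the paper. *)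
Definition tsh (R : realFieldType) d (g : series R d) (v : mi d)
    (p : mi d -> R -> R) : Prop :=
  forall s t : R, 0 <= s -> s <= t ->
  forall j : mi d, mle j v ->
    \sum_(k <- box v | mle j k)
        p k t * (mbin k j)%:R * moment g (t - s) (msub k j) = p j s.

Definition Pev (R : realFieldType) d (v : mi d) (p : mi d -> R -> R)
    (x : 'I_d -> R) (t : R) : R :=
  \sum_(k <- box v) p k t * mono x k.

(* Q_k(x,t) = E[(x - t.mu)^k] = sum_{i<=k} C(k,i) x^(k-i) m_i(-t) *)
Definition Qpol (R : realFieldType) d (g : series R d) (k : mi d)
    (x : 'I_d -> R) (t : R) : R :=
  \sum_(i <- box k) (mbin k i)%:R * mono x (msub k i) * moment g (- t) i.

(* The moments [m_v(t)] of [t . mu] are the exponential coefficients of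
   [exp (t log f)], so they obey the exponential law [m(s) * m(t) = m(s + t)]
   for the product [smul] of exponential generating functions, and [m(0) = 1].
   Write [K_r] for the operator [(K_r q)_j = sum_(j <= k <= v) C(k, j) q_k m_(k-j)(r)]
   on coefficient vectors; harmonicity of [P] says [K_(t-s) p(t) = p(s)].
   The exponential law gives [K_r1 o K_r2 = K_(r1 + r2)] and [K_0 = id], so:
   - harmonic implies [p(t) = K_(-t) K_t p(t) = K_(-t) p(0)];
   - conversely [K_(t-s) p(t) = K_(t-s) K_(-t) p(0) = K_(-s) p(0) = p(s)].
   For the second form, [sum_k p_k(0) Q_k(x, t)] expands in monomials with
   coefficients [K_(-t) p(0)], and a polynomial function determines its
   coefficients (Kronecker substitution reduces this to one variable). *)

From HB Require Import structures.
From mathcomp Require Import all_boot all_order all_algebra.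
From mathcomp Require Import zify ring.
Import Order.TTheory GRing.Theory Num.Theory.

Section MultiIndex.
Context {d : nat}.
Implicit Types (i j k l v w : mi d).

Lemma mleP k v : reflect (forall x, k x <= v x) (mle k v).
Proof. exact: forallP. Qed.

Lemma mle_refl v : mle v v.
Proof. by apply/mleP. Qed.

Lemma mle_trans {i j k} : mle i j -> mle j k -> mle i k.
Proof. by move=> /mleP hij /mleP hjk; apply/mleP=> x; apply: leq_trans (hij x) (hjk x). Qed.

Lemma mle0 v : mle (m0 d) v.
Proof. by apply/mleP=> x; rewrite ffunE. Qed.

Lemma mle_msub v k : mle (msub v k) v.
Proof. by apply/mleP=> x; rewrite ffunE leq_subr. Qed.

Lemma mle_msub2 k i l : mle k i -> mle i l -> mle (msub i k) (msub l k).
Proof. by move=> /mleP hki /mleP hil; apply/mleP=> x; rewrite !ffunE leq_sub2r. Qed.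

Definition madd j k : mi d := [ffun x => j x + k x].

Lemma msubK {k i} : mle k i -> madd (msub i k) k = i.
Proof. by move=> /mleP hki; apply/ffunP=> x; rewrite !ffunE subnK. Qed.

Lemma maddK j k : msub (madd j k) k = j.
Proof. by apply/ffunP=> x; rewrite !ffunE addnK. Qed.

Lemma msub_msub {k i l} : mle k i -> mle i l -> msub (msub l k) (msub i k) = msub l i.
Proof.
by move=> /mleP hki /mleP hil; apply/ffunP=> x; move: (hki x) (hil x); rewrite !ffunE; lia.
Qed.

Lemma msubKK {i l} : mle i l -> msub l (msub l i) = i.
Proof. by move=> /mleP hil; apply/ffunP=> x; rewrite !ffunE subKn. Qed.

Lemma msub0 v : msub v (m0 d) = v.
Proof. by apply/ffunP=> x; rewrite !ffunE subn0. Qed.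

Lemma msubvv v : msub v v = m0 d.
Proof. by apply/ffunP=> x; rewrite !ffunE subnn. Qed.

Lemma msub_eq0 {k l} : mle k l -> (msub l k == m0 d) = (l == k).
Proof.
move=> /mleP hkl; apply/eqP/eqP=> [e|->]; last exact: msubvv.
apply/ffunP=> x; move: (hkl x) (congr1 (fun f : mi d => f x) e) => /=; rewrite !ffunE; lia.
Qed.

Lemma mdeg_msub {k w} : mle k w -> mdeg (msub w k) + mdeg k = mdeg w.
Proof.
move=> /mleP hkw; rewrite /mdeg -big_split; apply: eq_bigr => x _.
by rewrite ffunE; exact: subnK.
Qed.

Lemma mdeg_eq0 k : (mdeg k == 0) = (k == m0 d).
Proof.
rewrite /mdeg sum_nat_eq0; apply/forallP/eqP=> [hk|-> x]; last by rewrite ffunE.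
by apply/ffunP=> x; rewrite ffunE; apply/eqP; exact: hk.
Qed.

Lemma mdeg0 : mdeg (m0 d) = 0.
Proof. by apply/eqP; rewrite mdeg_eq0. Qed.

Lemma mem_box k v : (k \in box v) = mle k v.
Proof.
apply/mapP/idP=> [[f]|hkv].
  by rewrite mem_enum inE => /forallP hf ->; apply/mleP=> x; rewrite ffunE.
have hk x : k x < (mbnd v).+1.
  by rewrite ltnS (leq_trans (mleP _ _ hkv x)) // leq_bigmax.
exists [ffun x => Ordinal (hk x)]; last by apply/ffunP=> x; rewrite !ffunE.
by rewrite mem_enum inE; apply/forallP=> x; rewrite ffunE (mleP _ _ hkv).
Qed.

Lemma box_uniq v : uniq (box v).
Proof.
rewrite map_inj_uniq ?enum_uniq // => f1 f2 e; apply/ffunP=> x; apply: val_inj.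
by have := congr1 (fun f : mi d => f x) e; rewrite !ffunE.
Qed.

Lemma big_box_sub {V : nmodType} (P : pred (mi d)) (F : mi d -> V) {k v} :
  mle k v ->
  (\sum_(i <- box k | P i) F i = \sum_(i <- box v | mle i k && P i) F i)%R.
Proof.
move=> hkv; rewrite -big_filter -[RHS]big_filter.
apply: perm_big; apply: uniq_perm; rewrite ?filter_uniq ?box_uniq // => i.
rewrite !mem_filter !mem_box; case hik: (mle i k); rewrite ?andbF //=.
by rewrite (mle_trans hik hkv) andbT.
Qed.

Lemma big_box_shift {V : nmodType} (F : mi d -> V) {k v} :
  mle k v ->
  (\sum_(j <- box (msub v k)) F j = \sum_(i <- box v | mle k i) F (msub i k))%R.
Proof.
move=> hkv.
transitivity (\sum_(j <- map (fun i => msub i k) (filter (mle k) (box v))) F j)%R;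
  last by rewrite big_map big_filter.
apply: perm_big; apply: uniq_perm; rewrite ?box_uniq //.
  rewrite map_inj_in_uniq ?filter_uniq ?box_uniq // => i1 i2.
  by rewrite !mem_filter => /andP[h1 _] /andP[h2 _] e; rewrite -(msubK h1) -(msubK h2) e.
move=> j; rewrite mem_box; apply/idP/mapP=> [hj|[i + ->]].
  exists (madd j k); last by rewrite maddK.
  rewrite mem_filter mem_box; apply/andP; split; apply/mleP=> x; rewrite ffunE.
    exact: leq_addl.
  by move: (mleP _ _ hj x) (mleP _ _ hkv x); rewrite ffunE; lia.
by rewrite mem_filter mem_box => /andP[hki hiv]; apply: mle_msub2.
Qed.

Lemma big_box_reflect {V : nmodType} (F : mi d -> V) v :
  (\sum_(j <- box v) F j = \sum_(j <- box v) F (msub v j))%R.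
Proof.
transitivity (\sum_(j <- map (msub v) (box v)) F j)%R; last by rewrite big_map.
apply: perm_big; apply: uniq_perm; rewrite ?box_uniq //.
  rewrite map_inj_in_uniq ?box_uniq // => i1 i2; rewrite !mem_box => h1 h2 e.
  by rewrite -(msubKK h1) -(msubKK h2) e.
move=> j; rewrite mem_box; apply/idP/mapP=> [hj|[i _ ->]]; last exact: mle_msub.
by exists (msub v j); rewrite ?mem_box ?mle_msub ?msubKK.
Qed.

End MultiIndex.

(* Choosing [k] inside [i] inside [l] is choosing [k] inside [l], then the rest of [i]. *)
Lemma bin_chain k i l : k <= i <= l -> 'C(i, k) * 'C(l, i) = 'C(l, k) * 'C(l - k, i - k).
Proof.
case/andP=> hki hil; have hkl := leq_trans hki hil.
have fact_pos : 0 < k`! * (i - k)`! * (l - i)`! by rewrite !muln_gt0 !fact_gt0.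
apply/eqP; rewrite -(eqn_pmul2r fact_pos); apply/eqP.
have -> : 'C(i, k) * 'C(l, i) * (k`! * (i - k)`! * (l - i)`!) = l`!.
  by rewrite -(bin_fact hil) -(bin_fact hki); ring.
have hik : i - k <= l - k by lia.
have hrest : l - k - (i - k) = l - i by lia.
by rewrite -(bin_fact hkl) -(bin_fact hik) hrest; ring.
Qed.

Lemma mbin_chain d (k i l : mi d) : mle k i -> mle i l ->
  mbin i k * mbin l i = mbin l k * mbin (msub l k) (msub i k).
Proof.
move=> /mleP hki /mleP hil; rewrite /mbin -!big_split /=; apply: eq_bigr => x _.
by rewrite !ffunE bin_chain ?hki ?hil.
Qed.

Lemma mbin_sym d (i k : mi d) : mle i k -> mbin k (msub k i) = mbin k i.
Proof. by move=> /mleP hik; apply: eq_bigr => x _; rewrite ffunE bin_sub. Qed.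

Lemma digits_inj {B n} {a b : 'I_n -> nat} :
  (forall i, a i < B) -> (forall i, b i < B) ->
  \sum_(i < n) B ^ i * a i = \sum_(i < n) B ^ i * b i -> a =1 b.
Proof.
elim: n a b => [|n IH] a b ha hb; first by move=> _ [].
rewrite !big_ord_recl /= !expn0 !mul1n.
under eq_bigr do rewrite /bump add1n expnS -mulnA.
under [X in _ = _ + X -> _]eq_bigr do rewrite /bump add1n expnS -mulnA.
rewrite -!big_distrr /= => E i.
have hB : 0 < B by apply: leq_ltn_trans (ha i).
have e0 : a ord0 = b ord0.
  have := congr1 (modn ^~ B) E.
  by rewrite ![_ + B * _]addnC ![B * _]mulnC !modnMDl !modn_small.
have e1 : \sum_(i < n) B ^ i * a (lift ord0 i) = \sum_(i < n) B ^ i * b (lift ord0 i).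
  have := congr1 (divn ^~ B) E.
  by rewrite ![_ + B * _]addnC ![B * _]mulnC !divnMDl // !divn_small // !addn0.
have [j ->|->] := unliftP ord0 i; last exact: e0.
exact: (IH (fun j => a (lift ord0 j)) (fun j => b (lift ord0 j))).
Qed.

Local Open Scope ring_scope.

Section ExponentialSeries.
Context {R : comNzRingType} {d : nat}.
Implicit Types (i j k l v w : mi d) (a b c : series R d).

Lemma smul_shift_sum a b {k l} : mle k l ->
  \sum_(i <- box l | mle k i) (mbin i k)%:R * (mbin l i)%:R * a (msub i k) * b (msub l i)
  = (mbin l k)%:R * smul a b (msub l k).
Proof.
move=> hkl; rewrite /smul (big_box_shift _ hkl) mulr_sumr.
rewrite [LHS]big_seq_cond [RHS]big_seq_cond; apply: eq_bigr => i /andP[hi hki].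
by rewrite mem_box in hi; rewrite (msub_msub hki hi) !mulrA -!natrM mbin_chain.
Qed.

Lemma smul_ext {a a' b b'} w : a =1 a' -> b =1 b' -> smul a b w = smul a' b' w.
Proof. by move=> ea eb; apply: eq_bigr => k _; rewrite ea eb. Qed.

Lemma smulZl (x : R) a b w : smul (fun u => x * a u) b w = x * smul a b w.
Proof. by rewrite /smul mulr_sumr; apply: eq_bigr => k _; ring. Qed.

Lemma smulZr (x : R) a b w : smul a (fun u => x * b u) w = x * smul a b w.
Proof. by rewrite /smul mulr_sumr; apply: eq_bigr => k _; ring. Qed.

Lemma mbin0 w : mbin w (m0 d) = 1%N.
Proof. by rewrite /mbin big1 // => x _; rewrite ffunE bin0. Qed.

Lemma smul1l b w : smul (@sone R d) b w = b w.
Proof.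
rewrite /smul (bigD1_seq (m0 d)) ?mem_box ?mle0 ?box_uniq //= /sone eqxx mbin0 msub0.
by rewrite !mul1r big1 ?addr0 // => k /negbTE->; rewrite mulr0 mul0r.
Qed.

Lemma smulA a b c w : smul (smul a b) c w = smul a (smul b c) w.
Proof.
transitivity (\sum_(i <- box w) \sum_(k <- box w | mle k i)
   a k * ((mbin i k)%:R * (mbin w i)%:R * b (msub i k) * c (msub w i))).
  rewrite /smul !big_seq; apply: eq_bigr => i; rewrite mem_box => hi.
  rewrite (big_box_sub _ _ hi) mulr_sumr mulr_suml.
  by apply: eq_big => [k|k _]; [rewrite andbT | ring].
rewrite (exchange_big_dep xpredT) //= /smul [LHS]big_seq [RHS]big_seq.
apply: eq_bigr => k; rewrite mem_box => hk.
by rewrite -mulr_sumr (smul_shift_sum _ _ hk) mulrCA mulrA.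
Qed.

Lemma spowS a n w : spow a n.+1 w = smul a (spow a n) w.
Proof. by []. Qed.

Lemma spow_small {a n w} : a (m0 d) = 0 -> (mdeg w < n)%N -> spow a n w = 0.
Proof.
move=> a0; elim: n w => [//|n IH] w hw; rewrite spowS /smul big1_seq // => k.
rewrite mem_box => /andP[_ hk].
have [->|nk] := eqVneq k (m0 d); first by rewrite a0 mulr0 mul0r.
rewrite IH ?mulr0 //; have := mdeg_msub hk; rewrite -mdeg_eq0 in nk; move: nk; lia.
Qed.

Lemma spowZ (x : R) a n w : spow (fun u => x * a u) n w = x ^+ n * spow a n w.
Proof.
elim: n w => [|n IH] w; first by rewrite expr0 mul1r.
by rewrite spowS (smul_ext w (frefl _) IH) smulZl smulZr exprS mulrA.
Qed.

Lemma spowD a n m w : smul (spow a n) (spow a m) w = spow a (n + m) w.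
Proof.
elim: n w => [|n IH] w; first exact: smul1l.
by rewrite addSn spowS -(smul_ext w (frefl _) IH) -smulA.
Qed.

End ExponentialSeries.

Lemma big_antidiagonal {V : nmodType} (F : nat -> nat -> V) M :
  \sum_(0 <= N < M) \sum_(0 <= i < N.+1) F i (N - i)%N =
  \sum_(0 <= i < M) \sum_(0 <= j < M - i) F i j.
Proof.
elim: M => [|M IH]; first by rewrite !big_geq.
rewrite big_nat_recr // IH [RHS]big_nat_recr //= subSnn big_nat_recr //= subnn big_nat1.
rewrite addrA -big_split /=; congr (_ + _); apply: eq_big_nat => i /andP[_ hi].
by rewrite subSn ?(ltnW hi) // big_nat_recr.
Qed.

Lemma big_square_triangle {V : nmodType} (F : nat -> nat -> V) M :
  (forall n m, (M <= n + m)%N -> F n m = 0) ->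
  \sum_(0 <= n < M) \sum_(0 <= m < M) F n m =
  \sum_(0 <= N < M) \sum_(0 <= i < N.+1) F (N - i)%N i.
Proof.
move=> F0; rewrite exchange_big_nat (big_antidiagonal (fun i j => F j i)).
apply: eq_big_nat => i /andP[_ hi].
rewrite (@big_cat_nat _ _ _ (M - i)) ?leq_subr //= [X in _ + X]big1_seq ?addr0 //.
by move=> j /andP[_]; rewrite mem_index_iota => /andP[hj _]; apply: F0; lia.
Qed.

Lemma exp_binomial_coef (R : numFieldType) (x y : R) N i : (i <= N)%N ->
  x ^+ (N - i) / (N - i)`!%:R * (y ^+ i / i`!%:R) =
  x ^+ (N - i) * y ^+ i *+ 'C(N, i) / N`!%:R.
Proof.
move=> hiN; rewrite -(bin_fact hiN) !natrM -mulr_natr.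
have fact_neq0 n : n`!%:R != 0 :> R by rewrite pnatr_eq0 -lt0n fact_gt0.
by field; rewrite !fact_neq0 pnatr_eq0 -lt0n bin_gt0 hiN.
Qed.

Section Moments.
Context {R : numFieldType} {d : nat} (g : series R d).
Implicit Types (k w : mi d).

Lemma slog_m0 : slog g (m0 d) = 0.
Proof. by rewrite /slog mdeg0 big_geq. Qed.

Lemma moment_trunc t w M : (mdeg w < M)%N ->
  moment g t w = \sum_(0 <= n < M) t ^+ n / n`!%:R * spow (slog g) n w.
Proof.
move=> hwM; rewrite /moment /sexp (@big_cat_nat _ _ _ (mdeg w).+1 0 M) //=.
rewrite [X in _ = _ + X]big1_seq ?addr0 => [|n]; last first.
  move=> /andP[_]; rewrite mem_index_iota => /andP[hn _].
  by rewrite spow_small ?slog_m0 ?mulr0.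
by apply: eq_bigr => n _; rewrite spowZ mulrA (mulrC _^-1).
Qed.

Lemma moment0 w : moment g 0 w = @sone R d w.
Proof.
rewrite (@moment_trunc 0 w _ (ltnSn _)) big_ltn // expr0 fact0 invr1 !mul1r.
rewrite big1_seq ?addr0 // => n /andP[_]; rewrite mem_index_iota => /andP[hn _].
by rewrite expr0n gtn_eqF // !mul0r.
Qed.

Lemma momentD (x y : R) w : smul (moment g x) (moment g y) w = moment g (x + y) w.
Proof.
set M := (mdeg w).+1.
pose F n m := x ^+ n / n`!%:R * (y ^+ m / m`!%:R) * spow (slog g) (n + m) w.
have F0 n m : (M <= n + m)%N -> F n m = 0.
  by move=> hnm; rewrite /F (spow_small slog_m0 hnm) mulr0.
transitivity (\sum_(0 <= n < M) \sum_(0 <= m < M) F n m).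
  rewrite /smul; under eq_big_seq => k.
    rewrite mem_box => hk; have := mdeg_msub hk => hdeg.
    rewrite (@moment_trunc x k M) ?(@moment_trunc y (msub w k) M); try (rewrite /M; lia).
    rewrite [_%:R * _]mulr_sumr big_distrlr /=; over.
  rewrite exchange_big; apply: eq_bigr => n _; rewrite exchange_big; apply: eq_bigr => m _.
  by rewrite /F -spowD /smul mulr_sumr; apply: eq_bigr => k _; ring.
rewrite big_square_triangle // (@moment_trunc (x + y) w M) //.
apply: eq_big_nat => N _; rewrite exprDn !mulr_suml big_mkord.
apply: eq_bigr => -[i] /=; rewrite ltnS => hi _.
by rewrite /F subnK // exp_binomial_coef.
Qed.

End Moments.

Section Kernel.
Context {R : numFieldType} {d : nat} (g : series R d) (v : mi d).
Implicit Types (q : mi d -> R) (i j k l : mi d).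

(* The transition operator of the family [t . mu] on coefficient vectors
   indexed by [box v]: [(K_r q)_j = sum_(j <= k <= v) C(k, j) q_k m_(k-j)(r)].
   Harmonicity says [K_(t-s) p(t) = p(s)]. *)
Definition kernel q (r : R) j : R :=
  \sum_(k <- box v | mle j k) (mbin k j)%:R * q k * moment g r (msub k j).

Lemma eq_kernel {q q' r j} : {in box v, q =1 q'} -> kernel q r j = kernel q' r j.
Proof.
move=> eq_q; rewrite /kernel big_seq_cond [RHS]big_seq_cond.
by apply: eq_bigr => k /andP[/eq_q->].
Qed.

(* Chapman-Kolmogorov: [K_r1 o K_r2 = K_(r1 + r2)], from the exponential law. *)
Lemma kernel_comp q r1 r2 k : mle k v ->
  kernel (kernel q r2) r1 k = kernel q (r1 + r2) k.
Proof.
move=> hkv; rewrite /kernel.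
transitivity (\sum_(i <- box v | mle k i) \sum_(l <- box v | mle i l) q l *
   ((mbin i k)%:R * (mbin l i)%:R * moment g r1 (msub i k) * moment g r2 (msub l i))).
  apply: eq_bigr => i _; rewrite mulr_sumr mulr_suml; apply: eq_bigr => l _; ring.
rewrite (exchange_big_dep (mle k)) /=; last by move=> i l hki hil; apply: mle_trans hki hil.
rewrite big_seq_cond [RHS]big_seq_cond; apply: eq_bigr => l /andP[]; rewrite mem_box => hlv hkl.
under eq_bigl => i do rewrite andbC.
rewrite -mulr_sumr -(big_box_sub (mle k) _ hlv) smul_shift_sum // momentD; ring.
Qed.

(* [K_0] is the identity, since [m(0) = 1]. *)
Lemma kernel0 q k : mle k v -> kernel q 0 k = q k.
Proof.
move=> hkv; rewrite /kernel -big_filter (bigD1_seq k) ?filter_uniq ?box_uniq //=; last first.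
  by rewrite mem_filter mle_refl mem_box.
rewrite msubvv moment0 /sone eqxx /mbin big1 ?mulr1 ?mul1r => [|x _]; last by rewrite binn.
rewrite big1_seq ?addr0 // => l /andP[nlk]; rewrite mem_filter => /andP[hkl _].
by rewrite moment0 /sone (msub_eq0 hkl) (negbTE nlk) mulr0.
Qed.

End Kernel.

Section QExpansion.
Context {R : realFieldType} {d : nat} (g : series R d) (v : mi d).

Lemma Qpol_expand (q : mi d -> R) x t :
  \sum_(k <- box v) q k * Qpol g k x t = \sum_(j <- box v) kernel g v q (- t) j * mono x j.
Proof.
transitivity (\sum_(k <- box v) \sum_(j <- box v | mle j k)
    q k * ((mbin k j)%:R * mono x j * moment g (- t) (msub k j))).
  rewrite !big_seq; apply: eq_bigr => k; rewrite mem_box => hk.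
  rewrite /Qpol big_box_reflect mulr_sumr (big_box_sub xpredT _ hk).
  rewrite big_seq_cond [RHS]big_seq_cond.
  apply: eq_big => [i|i /andP[_ /andP[hik _]]]; first by rewrite andbT.
  by rewrite (msubKK hik) mbin_sym.
rewrite (exchange_big_dep xpredT) //=; apply: eq_bigr => j _.
by rewrite /kernel mulr_suml; apply: eq_bigr => k _; ring.
Qed.

End QExpansion.

Section Harmonic.
Context {R : realFieldType} {d : nat} (g : series R d) (v : mi d) (p : mi d -> R -> R).

Lemma tshE : tsh g v p <-> forall s t : R, 0 <= s -> s <= t ->
  forall j, mle j v -> kernel g v (p^~ t) (t - s) j = p j s.
Proof.
have kernelE s t j : \sum_(k <- box v | mle j k)
    p k t * (mbin k j)%:R * moment g (t - s) (msub k j) = kernel g v (p^~ t) (t - s) j.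
  by apply: eq_bigr => k _; rewrite (mulrC (p k t)).
by split=> h s t hs hst j hj; [rewrite -kernelE | rewrite kernelE]; apply: h.
Qed.

Lemma tsh_iff_backward : tsh g v p <->
  forall t : R, 0 <= t -> forall k, mle k v -> p k t = kernel g v (p^~ 0) (- t) k.
Proof.
rewrite tshE; split=> [h t ht k hk | h s t hs hst j hj].
  have p0 : {in box v, p^~ 0 =1 kernel g v (p^~ t) t}.
    by move=> i; rewrite mem_box => hi; rewrite -(h 0 t (lexx 0) ht i hi) subr0.
  by rewrite (eq_kernel _ _ p0) kernel_comp // addNr kernel0.
have pt : {in box v, p^~ t =1 kernel g v (p^~ 0) (- t)}.
  by move=> k; rewrite mem_box; apply: h; apply: le_trans hst.
rewrite (eq_kernel _ _ pt) kernel_comp //.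
have -> : t - s + - t = - s by rewrite addrC addKr.
by rewrite (h s hs j hj).
Qed.

End Harmonic.

(* Over a number domain (which contains the distinct points [n%:R]) a polynomial
   vanishing everywhere is zero. *)
Lemma poly_fun_eq0 (R : numDomainType) (q : {poly R}) : (forall y, q.[y] = 0) -> q = 0.
Proof.
move=> q0; apply: (@roots_geq_poly_eq0 _ _ [seq n%:R | n <- iota 0 (size q)]).
- by apply/allP=> _ /mapP[n _ ->]; rewrite /root q0.
- by rewrite map_inj_uniq ?iota_uniq // => m n /eqP; rewrite eqr_nat => /eqP.
- by rewrite size_map size_iota.
Qed.

(* Substituting
   [x_i = y ^ B^i] with [B > max v] (Kronecker) reduces it to one variable. *)
Lemma mono_coef_eq0 {R : numDomainType} {d} {v : mi d} (c : mi d -> R) :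
  (forall x : 'I_d -> R, \sum_(k <- box v) c k * mono x k = 0) ->
  forall j, mle j v -> c j = 0.
Proof.
move=> c0 j hj; set B := (mbnd v).+1.
pose enc (k : mi d) := (\sum_(i < d) B ^ i * k i)%N.
have digits k : mle k v -> forall i, (k i < B)%N.
  by move=> /mleP hk i; rewrite ltnS (leq_trans (hk i)) // leq_bigmax.
have enc_inj k : mle k v -> enc k = enc j -> k = j.
  by move=> hk e; apply/ffunP => x; apply: (digits_inj (digits k hk) (digits j hj) e).
pose q : {poly R} := \sum_(k <- box v) c k *: 'X^(enc k).
have q0 : q = 0.
  apply: poly_fun_eq0 => y; rewrite -(c0 (fun i => y ^+ (B ^ i))) horner_sum.
  apply: eq_bigr => k _; rewrite hornerZ hornerXn /mono -prodrXr.
  by congr (_ * _); apply: eq_bigr => i _; rewrite exprM.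
have := congr1 (fun r : {poly R} => r`_(enc j)) q0.
rewrite coef0 coef_sum (bigD1_seq j) ?mem_box ?box_uniq //= coefZ coefXn eqxx mulr1.
rewrite big1_seq ?addr0 // => k /andP[nkj]; rewrite mem_box => hk.
rewrite coefZ coefXn; case: eqP => [/esym/(enc_inj k hk) ekj | _]; last by rewrite mulr0.
by rewrite ekj eqxx in nkj.
Qed.

Theorem mainTheorem6 (R : realFieldType) (d : nat) (hd : (0 < d)%N)
    (g : series R d) (hg0 : g (@m0 d) = 1)
    (v : mi d) (p : mi d -> R -> R) :
  (tsh g v p <->
     (forall t : R, 0 <= t -> forall k : mi d, mle k v ->
        p k t = \sum_(i <- box v | mle k i)
                   (mbin i k)%:R * p i 0 * moment g (- t) (msub i k)))
  /\
  (tsh g v p <->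
     (forall t : R, 0 <= t -> forall x : 'I_d -> R,
        Pev v p x t = \sum_(k <- box v) p k 0 * Qpol g k x t)).
Proof.
have backward := tsh_iff_backward g v p.
split; first exact: backward.
rewrite backward; split=> [hp t ht x | hP t ht].
  rewrite /Pev Qpol_expand; apply: eq_big_seq => k; rewrite mem_box => hk.
  by rewrite hp.
move=> k hk; apply/eqP; rewrite -subr_eq0; apply/eqP; move: k hk.
apply: (mono_coef_eq0 (fun k => p k t - kernel g v (p^~ 0) (- t) k)) => x.
under eq_bigr do rewrite mulrBl.
by rewrite sumrB -Qpol_expand -/(Pev v p x t) hP // subrr.
Qed.
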